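(* Let $N<22$ be even. Then all rays and counter-rays of the Birkhoff polytope $\mathcal{B}_N$ consist of unistochastic matrices. Moreover, for $N\in\{2,4,8,12,16,20\}$ all these matrices are orthostochastic; for $N\in\{6,10,14,18\}$ they are unistochastic.
   Context: A bistochastic matrix is a real $N\times N$ matrix with nonnegative entries whose rows and columns each sum to 1; the set of them is the Birkhoff polytope $\mathcal{B}_N$. A bistochastic $B$ is unistochastic if there is a unitary $U$ with $B_{ij}=|U_{ij}|^2$ for all $i,j$, and orthostochastic if such $U$ can be chosen real orthogonal. $W_N$ is the $N\times N$ matrix with all entries $1/N$. For a permutation matrix $P$, its ray is $\{\alpha P+(1-\alpha)W_N:\alpha\ge0\}\cap\mathcal{B}_N$ and its counter-ray is $\{\alpha P+(1-\alpha)W_N:\alpha\le0\}\cap\mathcal{B}_N$. *)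

From mathcomp Require Import all_boot all_order all_algebra all_fingroup.
From mathcomp Require Import complex Rstruct.
From Stdlib Require Import Reals.
Set Implicit Arguments. Unset Strict Implicit. Unset Printing Implicit Defensive.
Import Order.TTheory GRing.Theory Num.Theory.
Local Open Scope ring_scope.

Notation Real := Rdefinitions.R.

Definition bistochastic (N : nat) (B : 'M[Real]_N) : Prop :=
  (forall i j, 0 <= B i j) /\
  (forall i, \sum_j B i j = 1) /\
  (forall j, \sum_i B i j = 1).

Definition unitary_mx (N : nat) (U : 'M[Real[i]]_N) : Prop :=
  U *m (map_mx Num.conj U)^T = 1%:M.

Definition orthogonal_mx (N : nat) (O : 'M[Real]_N) : Prop :=
  O *m O^T = 1%:M.

Definition unistochastic (N : nat) (B : 'M[Real]_N) : Prop :=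
  bistochastic B /\
  exists U : 'M[Real[i]]_N, unitary_mx U /\
    forall i j, ((B i j)%:C)%C = `|U i j| ^+ 2.

Definition orthostochastic (N : nat) (B : 'M[Real]_N) : Prop :=
  bistochastic B /\
  exists O : 'M[Real]_N, orthogonal_mx O /\
    forall i j, B i j = O i j ^+ 2.

Definition flat_mx (N : nat) : 'M[Real]_N := const_mx (N%:R)^-1.

Definition in_ray (N : nat) (s : 'S_N) (B : 'M[Real]_N) : Prop :=
  exists alpha : Real, 0 <= alpha /\
    B = alpha *: perm_mx s + (1 - alpha) *: flat_mx N /\ bistochastic B.

Definition in_counter_ray (N : nat) (s : 'S_N) (B : 'M[Real]_N) : Prop :=
  exists alpha : Real, alpha <= 0 /\
    B = alpha *: perm_mx s + (1 - alpha) *: flat_mx N /\ bistochastic B.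

From mathcomp Require Import all_boot all_order all_algebra all_fingroup.
From mathcomp Require Import complex Rstruct.
Import Order.TTheory GRing.Theory Num.Theory.
Set Implicit Arguments.
Unset Strict Implicit.
Unset Printing Implicit Defensive.

Local Open Scope ring_scope.

(** Write a ray or counter-ray matrix as [B i j = a] if [s i = j] and [b]
otherwise, with [a + (N-1) b = 1] and [a, b >= 0].  Given a conference matrix
[C] of order [N] (zero diagonal, [+-1] elsewhere, [C C^T = (N-1) I]), put
[V = x I + y C]: if [C] is skew-symmetric and [x = sqrt a], [y = sqrt b], then
[V V^T = (a + (N-1) b) I = I]; if [C] is symmetric, the same holds with
[y = i sqrt b] and [V^*] in place of [V^T].  In both cases [|V i j|^2] is [a]
on the diagonal and [b] off it, and permuting the columns of [V] by [s] yields
[B].  Skew-symmetric conference matrices exist for [N = 2] and [N] divisible by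
4, symmetric ones for [N = 2 mod 4] with [N - 1] a sum of two squares; for
[N < 22] they are given explicitly below and checked by computation. *)

Definition conference (R : pzRingType) (n : nat) (C : 'M[R]_n) : Prop :=
  [/\ forall i, C i i = 0,
      forall i j, i != j -> C i j ^+ 2 = 1
    & C *m C^T = (n.-1)%:R%:M].

Lemma map_conference (R S : pzRingType) (f : {rmorphism R -> S}) n
    (C : 'M[R]_n) :
  conference C -> conference (map_mx f C).
Proof.
case=> C0 C1 CCt; split=> [i | i j ij | ].
- by rewrite mxE C0 rmorph0.
- by rewrite mxE -rmorphXn C1 // rmorph1.
- by rewrite map_trmx -map_mxM CCt map_scalar_mx rmorph_nat.
Qed.

Lemma mulmx_addsub_scalar (R : comPzRingType) n (x y k : R) (C : 'M[R]_n) :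
  C *m C = k%:M -> (x%:M + y *: C) *m (x%:M - y *: C) = (x * x - y * y * k)%:M.
Proof.
move=> CC.
rewrite mulmxDl !mulmxBr !mul_scalar_mx -!scalemxAl -!scalemxAr CC !mul_mx_scalar.
by rewrite !scalerA mulrC addrA subrK !scale_scalar_mx -mulrA -raddfB.
Qed.

Lemma col_perm_mul_tr (R : pzRingType) m n (s : 'S_n) (A B : 'M[R]_(m, n)) :
  col_perm s A *m (col_perm s B)^T = A *m B^T.
Proof.
rewrite tr_col_perm row_permE col_permE -mulmxA (mulmxA (perm_mx s^-1)).
by rewrite -perm_mxM mulVg perm_mx1 mul1mx.
Qed.

Lemma conference_pencil_sqr (R : comPzRingType) n (s : 'S_n) (x y : R)
    (C : 'M[R]_n) :
  conference C -> forall i j,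
  col_perm s^-1 (x%:M + y *: C) i j ^+ 2 = if s i == j then x ^+ 2 else y ^+ 2.
Proof.
case=> C0 C1 _ i j; rewrite !mxE (canF_eq (permK s)) eq_sym.
case: eqP => [<- | /eqP ij]; first by rewrite C0 mulr0 addr0 mulr1n.
by rewrite mulr0n add0r exprMn C1 ?mulr1 // eq_sym.
Qed.

Definition perm_pattern_mx (R : Type) n (s : 'S_n) (a b : R) : 'M[R]_n :=
  \matrix_(i, j) if s i == j then a else b.

Lemma perm_pattern_mx_bistochastic_weights n (s : 'S_n) (a b : Real) :
  (1 < n)%N -> bistochastic (perm_pattern_mx s a b) ->
  [/\ 0 <= a, 0 <= b & a + (n.-1)%:R * b = 1].
Proof.
move=> n_gt1 [B0 [row1 _]]; pose i0 : 'I_n := Ordinal (ltnW n_gt1).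
have row_sum : \sum_j perm_pattern_mx s a b i0 j = a + (n.-1)%:R * b.
  rewrite (bigD1 (s i0)) //= mxE eqxx; congr (_ + _).
  rewrite (eq_bigr (fun _ => b)) => [|j /negPf]; last by rewrite mxE eq_sym => ->.
  by rewrite sumr_const cardC1 card_ord mulr_natl.
split; last by rewrite -row_sum row1.
- by have := B0 i0 (s i0); rewrite mxE eqxx.
- have [j si0j] : exists j, s i0 != j.
    by case: (eqVneq (s i0) i0) => [-> | ?]; [exists (Ordinal n_gt1) | exists i0].
  by have := B0 i0 j; rewrite mxE (negPf si0j).
Qed.

Lemma ray_combination_perm_pattern n (s : 'S_n) (al : Real) :
  al *: perm_mx s + (1 - al) *: flat_mx n =
  perm_pattern_mx s (al + (1 - al) / n%:R) ((1 - al) / n%:R).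
Proof.
by apply/matrixP=> i j; rewrite !mxE; case: (s i == j); rewrite ?mulr1 ?mulr0 ?add0r.
Qed.

Lemma orthostochastic_skew_conference n (s : 'S_n) (a b : Real)
    (C : 'M[Real]_n) :
  conference C -> C^T = - C -> 0 <= a -> 0 <= b -> a + (n.-1)%:R * b = 1 ->
  bistochastic (perm_pattern_mx s a b) -> orthostochastic (perm_pattern_mx s a b).
Proof.
move=> confC skewC a0 b0 ab1 bB; split=> //.
have CC : C *m C = (- (n.-1)%:R)%:M.
  case: confC => _ _; rewrite skewC mulmxN => /(congr1 -%R).
  by rewrite opprK => ->; rewrite raddfN.
exists (col_perm s^-1 ((Num.sqrt a)%:M + Num.sqrt b *: C)); split=> [|i j].
- rewrite /orthogonal_mx col_perm_mul_tr raddfD /= tr_scalar_mx linearZ /= skewC.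
  rewrite scalerN (mulmx_addsub_scalar _ _ CC) -!expr2 !sqr_sqrtr //.
  by rewrite mulrN opprK mulrC ab1.
- by rewrite conference_pencil_sqr // mxE !sqr_sqrtr //; case: ifP.
Qed.

Local Open Scope complex_scope.

Lemma unistochastic_sym_conference n (s : 'S_n) (a b : Real)
    (C : 'M[Real]_n) :
  conference C -> C^T = C -> 0 <= a -> 0 <= b -> a + (n.-1)%:R * b = 1 ->
  bistochastic (perm_pattern_mx s a b) -> unistochastic (perm_pattern_mx s a b).
Proof.
move=> confC symC a0 b0 ab1 bB; split=> //.
pose Cc := map_mx (real_complex Real) C.
have confCc : conference Cc by apply: map_conference.
have CcCc : Cc *m Cc = (n.-1)%:R%:M.
  by case: confCc => _ _; rewrite map_trmx symC.
pose x : Real[i] := (Num.sqrt a)%:C; pose y : Real[i] := 'i * (Num.sqrt b)%:C.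
have xx : x * x = a%:C by rewrite -rmorphM -expr2 sqr_sqrtr.
have yy : y * y = - b%:C.
  by rewrite mulrACA -expr2 sqr_i -rmorphM -expr2 sqr_sqrtr // mulN1r.
have conjV : map_mx Num.conj (x%:M + y *: Cc) = x%:M - y *: Cc.
  have conj_real (r : Real) : Num.conj r%:C = r%:C := conjc_real r.
  have conj_i : Num.conj ('i : Real[i]) = - 'i.
    by apply/eqP; rewrite eq_complex /= oppr0 !eqxx.
  apply/matrixP=> i j; rewrite !mxE rmorphD rmorphMn !rmorphM /= /x /y.
  by rewrite !conj_real conj_i !mulNr.
exists (col_perm s^-1 (x%:M + y *: Cc)); split=> [|i j].
- rewrite /unitary_mx map_col_perm col_perm_mul_tr conjV.
  rewrite raddfB /= tr_scalar_mx linearZ /= map_trmx symC (mulmx_addsub_scalar _ _ CcCc).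
  rewrite xx yy mulNr opprK; congr (_%:M).
  by rewrite -[RHS]/(1%:C) -ab1 rmorphD rmorphM rmorph_nat mulrC.
- rewrite -normrX conference_pencil_sqr // mxE !expr2 xx yy.
  by case: ifP => _; rewrite ?normrN ger0_norm // ler0c.
Qed.

Lemma orthostochastic_unistochastic n (B : 'M[Real]_n) :
  orthostochastic B -> unistochastic B.
Proof.
case=> bB [O [OOt BE]]; split=> //.
exists (map_mx (real_complex Real) O); split=> [|i j].
- rewrite /unitary_mx (_ : map_mx Num.conj _ = map_mx (real_complex Real) O).
    by rewrite map_trmx -map_mxM OOt map_scalar_mx rmorph1.
  by apply/matrixP=> i j; rewrite !mxE; apply: conjc_real.
- by rewrite mxE BE -normrX -rmorphXn ger0_norm // ler0c sqr_ge0.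
Qed.

Local Close Scope complex_scope.

Definition conference_table (n : nat) : seq (seq int) :=
  match n with
  | 2 => [::
      [::  0;  1];
      [:: -1;  0]]
  | 4 => [::
      [::  0;  1;  1;  1];
      [:: -1;  0;  1; -1];
      [:: -1; -1;  0;  1];
      [:: -1;  1; -1;  0]]
  | 6 => [::
      [::  0;  1;  1;  1;  1;  1];
      [::  1;  0;  1; -1; -1;  1];
      [::  1;  1;  0;  1; -1; -1];
      [::  1; -1;  1;  0;  1; -1];
      [::  1; -1; -1;  1;  0;  1];
      [::  1;  1; -1; -1;  1;  0]]
  | 8 => [::
      [::  0;  1;  1;  1;  1;  1;  1;  1];
      [:: -1;  0;  1;  1; -1;  1; -1; -1];
      [:: -1; -1;  0;  1;  1; -1;  1; -1];
      [:: -1; -1; -1;  0;  1;  1; -1;  1];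
      [:: -1;  1; -1; -1;  0;  1;  1; -1];
      [:: -1; -1;  1; -1; -1;  0;  1;  1];
      [:: -1;  1; -1;  1; -1; -1;  0;  1];
      [:: -1;  1;  1; -1;  1; -1; -1;  0]]
  | 10 => [::
      [::  0;  1;  1;  1;  1;  1;  1;  1;  1;  1];
      [::  1;  0;  1;  1;  1; -1; -1;  1; -1; -1];
      [::  1;  1;  0;  1; -1;  1; -1; -1;  1; -1];
      [::  1;  1;  1;  0; -1; -1;  1; -1; -1;  1];
      [::  1;  1; -1; -1;  0;  1;  1;  1; -1; -1];
      [::  1; -1;  1; -1;  1;  0;  1; -1;  1; -1];
      [::  1; -1; -1;  1;  1;  1;  0; -1; -1;  1];
      [::  1;  1; -1; -1;  1; -1; -1;  0;  1;  1];
      [::  1; -1;  1; -1; -1;  1; -1;  1;  0;  1];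
      [::  1; -1; -1;  1; -1; -1;  1;  1;  1;  0]]
  | 12 => [::
      [::  0;  1;  1;  1;  1;  1;  1;  1;  1;  1;  1;  1];
      [:: -1;  0;  1; -1;  1;  1;  1; -1; -1; -1;  1; -1];
      [:: -1; -1;  0;  1; -1;  1;  1;  1; -1; -1; -1;  1];
      [:: -1;  1; -1;  0;  1; -1;  1;  1;  1; -1; -1; -1];
      [:: -1; -1;  1; -1;  0;  1; -1;  1;  1;  1; -1; -1];
      [:: -1; -1; -1;  1; -1;  0;  1; -1;  1;  1;  1; -1];
      [:: -1; -1; -1; -1;  1; -1;  0;  1; -1;  1;  1;  1];
      [:: -1;  1; -1; -1; -1;  1; -1;  0;  1; -1;  1;  1];
      [:: -1;  1;  1; -1; -1; -1;  1; -1;  0;  1; -1;  1];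
      [:: -1;  1;  1;  1; -1; -1; -1;  1; -1;  0;  1; -1];
      [:: -1; -1;  1;  1;  1; -1; -1; -1;  1; -1;  0;  1];
      [:: -1;  1; -1;  1;  1;  1; -1; -1; -1;  1; -1;  0]]
  | 14 => [::
      [::  0;  1;  1;  1;  1;  1;  1;  1;  1;  1;  1;  1;  1;  1];
      [::  1;  0;  1; -1;  1;  1; -1; -1; -1; -1;  1;  1; -1;  1];
      [::  1;  1;  0;  1; -1;  1;  1; -1; -1; -1; -1;  1;  1; -1];
      [::  1; -1;  1;  0;  1; -1;  1;  1; -1; -1; -1; -1;  1;  1];
      [::  1;  1; -1;  1;  0;  1; -1;  1;  1; -1; -1; -1; -1;  1];
      [::  1;  1;  1; -1;  1;  0;  1; -1;  1;  1; -1; -1; -1; -1];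
      [::  1; -1;  1;  1; -1;  1;  0;  1; -1;  1;  1; -1; -1; -1];
      [::  1; -1; -1;  1;  1; -1;  1;  0;  1; -1;  1;  1; -1; -1];
      [::  1; -1; -1; -1;  1;  1; -1;  1;  0;  1; -1;  1;  1; -1];
      [::  1; -1; -1; -1; -1;  1;  1; -1;  1;  0;  1; -1;  1;  1];
      [::  1;  1; -1; -1; -1; -1;  1;  1; -1;  1;  0;  1; -1;  1];
      [::  1;  1;  1; -1; -1; -1; -1;  1;  1; -1;  1;  0;  1; -1];
      [::  1; -1;  1;  1; -1; -1; -1; -1;  1;  1; -1;  1;  0;  1];
      [::  1;  1; -1;  1;  1; -1; -1; -1; -1;  1;  1; -1;  1;  0]]
  | 16 => [::
      [::  0;  1;  1;  1;  1;  1;  1;  1;  1;  1;  1;  1;  1;  1;  1;  1];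
      [:: -1;  0;  1;  1; -1;  1; -1; -1; -1;  1;  1;  1; -1;  1; -1; -1];
      [:: -1; -1;  0;  1;  1; -1;  1; -1; -1; -1;  1;  1;  1; -1;  1; -1];
      [:: -1; -1; -1;  0;  1;  1; -1;  1; -1; -1; -1;  1;  1;  1; -1;  1];
      [:: -1;  1; -1; -1;  0;  1;  1; -1; -1;  1; -1; -1;  1;  1;  1; -1];
      [:: -1; -1;  1; -1; -1;  0;  1;  1; -1; -1;  1; -1; -1;  1;  1;  1];
      [:: -1;  1; -1;  1; -1; -1;  0;  1; -1;  1; -1;  1; -1; -1;  1;  1];
      [:: -1;  1;  1; -1;  1; -1; -1;  0; -1;  1;  1; -1;  1; -1; -1;  1];
      [:: -1;  1;  1;  1;  1;  1;  1;  1;  0; -1; -1; -1; -1; -1; -1; -1];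
      [:: -1; -1;  1;  1; -1;  1; -1; -1;  1;  0; -1; -1;  1; -1;  1;  1];
      [:: -1; -1; -1;  1;  1; -1;  1; -1;  1;  1;  0; -1; -1;  1; -1;  1];
      [:: -1; -1; -1; -1;  1;  1; -1;  1;  1;  1;  1;  0; -1; -1;  1; -1];
      [:: -1;  1; -1; -1; -1;  1;  1; -1;  1; -1;  1;  1;  0; -1; -1;  1];
      [:: -1; -1;  1; -1; -1; -1;  1;  1;  1;  1; -1;  1;  1;  0; -1; -1];
      [:: -1;  1; -1;  1; -1; -1; -1;  1;  1; -1;  1; -1;  1;  1;  0; -1];
      [:: -1;  1;  1; -1;  1; -1; -1; -1;  1; -1; -1;  1; -1;  1;  1;  0]]
  | 18 => [::
      [::  0;  1;  1;  1;  1;  1;  1;  1;  1;  1;  1;  1;  1;  1;  1;  1;  1;  1];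
      [::  1;  0;  1;  1; -1;  1; -1; -1; -1;  1;  1; -1; -1; -1;  1; -1;  1;  1];
      [::  1;  1;  0;  1;  1; -1;  1; -1; -1; -1;  1;  1; -1; -1; -1;  1; -1;  1];
      [::  1;  1;  1;  0;  1;  1; -1;  1; -1; -1; -1;  1;  1; -1; -1; -1;  1; -1];
      [::  1; -1;  1;  1;  0;  1;  1; -1;  1; -1; -1; -1;  1;  1; -1; -1; -1;  1];
      [::  1;  1; -1;  1;  1;  0;  1;  1; -1;  1; -1; -1; -1;  1;  1; -1; -1; -1];
      [::  1; -1;  1; -1;  1;  1;  0;  1;  1; -1;  1; -1; -1; -1;  1;  1; -1; -1];
      [::  1; -1; -1;  1; -1;  1;  1;  0;  1;  1; -1;  1; -1; -1; -1;  1;  1; -1];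
      [::  1; -1; -1; -1;  1; -1;  1;  1;  0;  1;  1; -1;  1; -1; -1; -1;  1;  1];
      [::  1;  1; -1; -1; -1;  1; -1;  1;  1;  0;  1;  1; -1;  1; -1; -1; -1;  1];
      [::  1;  1;  1; -1; -1; -1;  1; -1;  1;  1;  0;  1;  1; -1;  1; -1; -1; -1];
      [::  1; -1;  1;  1; -1; -1; -1;  1; -1;  1;  1;  0;  1;  1; -1;  1; -1; -1];
      [::  1; -1; -1;  1;  1; -1; -1; -1;  1; -1;  1;  1;  0;  1;  1; -1;  1; -1];
      [::  1; -1; -1; -1;  1;  1; -1; -1; -1;  1; -1;  1;  1;  0;  1;  1; -1;  1];
      [::  1;  1; -1; -1; -1;  1;  1; -1; -1; -1;  1; -1;  1;  1;  0;  1;  1; -1];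
      [::  1; -1;  1; -1; -1; -1;  1;  1; -1; -1; -1;  1; -1;  1;  1;  0;  1;  1];
      [::  1;  1; -1;  1; -1; -1; -1;  1;  1; -1; -1; -1;  1; -1;  1;  1;  0;  1];
      [::  1;  1;  1; -1;  1; -1; -1; -1;  1;  1; -1; -1; -1;  1; -1;  1;  1;  0]]
  | 20 => [::
      [::  0;  1;  1;  1;  1;  1;  1;  1;  1;  1;  1;  1;  1;  1;  1;  1;  1;  1;  1;  1];
      [:: -1;  0;  1; -1; -1;  1;  1;  1;  1; -1;  1; -1;  1; -1; -1; -1; -1;  1;  1; -1];
      [:: -1; -1;  0;  1; -1; -1;  1;  1;  1;  1; -1;  1; -1;  1; -1; -1; -1; -1;  1;  1];
      [:: -1;  1; -1;  0;  1; -1; -1;  1;  1;  1;  1; -1;  1; -1;  1; -1; -1; -1; -1;  1];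
      [:: -1;  1;  1; -1;  0;  1; -1; -1;  1;  1;  1;  1; -1;  1; -1;  1; -1; -1; -1; -1];
      [:: -1; -1;  1;  1; -1;  0;  1; -1; -1;  1;  1;  1;  1; -1;  1; -1;  1; -1; -1; -1];
      [:: -1; -1; -1;  1;  1; -1;  0;  1; -1; -1;  1;  1;  1;  1; -1;  1; -1;  1; -1; -1];
      [:: -1; -1; -1; -1;  1;  1; -1;  0;  1; -1; -1;  1;  1;  1;  1; -1;  1; -1;  1; -1];
      [:: -1; -1; -1; -1; -1;  1;  1; -1;  0;  1; -1; -1;  1;  1;  1;  1; -1;  1; -1;  1];
      [:: -1;  1; -1; -1; -1; -1;  1;  1; -1;  0;  1; -1; -1;  1;  1;  1;  1; -1;  1; -1];
      [:: -1; -1;  1; -1; -1; -1; -1;  1;  1; -1;  0;  1; -1; -1;  1;  1;  1;  1; -1;  1];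
      [:: -1;  1; -1;  1; -1; -1; -1; -1;  1;  1; -1;  0;  1; -1; -1;  1;  1;  1;  1; -1];
      [:: -1; -1;  1; -1;  1; -1; -1; -1; -1;  1;  1; -1;  0;  1; -1; -1;  1;  1;  1;  1];
      [:: -1;  1; -1;  1; -1;  1; -1; -1; -1; -1;  1;  1; -1;  0;  1; -1; -1;  1;  1;  1];
      [:: -1;  1;  1; -1;  1; -1;  1; -1; -1; -1; -1;  1;  1; -1;  0;  1; -1; -1;  1;  1];
      [:: -1;  1;  1;  1; -1;  1; -1;  1; -1; -1; -1; -1;  1;  1; -1;  0;  1; -1; -1;  1];
      [:: -1;  1;  1;  1;  1; -1;  1; -1;  1; -1; -1; -1; -1;  1;  1; -1;  0;  1; -1; -1];
      [:: -1; -1;  1;  1;  1;  1; -1;  1; -1;  1; -1; -1; -1; -1;  1;  1; -1;  0;  1; -1];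
      [:: -1; -1; -1;  1;  1;  1;  1; -1;  1; -1;  1; -1; -1; -1; -1;  1;  1; -1;  0;  1];
      [:: -1;  1; -1; -1;  1;  1;  1;  1; -1;  1; -1;  1; -1; -1; -1; -1;  1;  1; -1;  0]]
  | _ => [::]
  end.

Definition table_entry (n i j : nat) : int :=
  nth 0 (nth [::] (conference_table n) i) j.

Definition table_mx (n : nat) : 'M[int]_n := \matrix_(i, j) table_entry n i j.

Definition conference_entryb (n : nat) (skew : bool) (i j : nat) : bool :=
  [&& if i == j then table_entry n i j == 0 else table_entry n i j ^+ 2 == 1,
      table_entry n j i == (if skew then - table_entry n i j else table_entry n i j)
    & foldr +%R 0 [seq table_entry n i k * table_entry n j k | k <- iota 0 n]
      == (if i == j then (n.-1)%:Z else 0)].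

Definition conference_tableb (n : nat) (skew : bool) : bool :=
  all (fun i => all (conference_entryb n skew i) (iota 0 n)) (iota 0 n).

Lemma conference_tableP n skew : conference_tableb n skew ->
  conference (table_mx n) /\
  (table_mx n)^T = if skew then - table_mx n else table_mx n.
Proof.
move=> ok; have {}ok (i j : 'I_n) : conference_entryb n skew i j.
  move/allP: ok => /(_ i); rewrite mem_iota ltn_ord => /(_ isT) /allP.
  by apply; rewrite mem_iota ltn_ord.
split; [split=> [i | i j ij |] | apply/matrixP=> i j].
- by have /and3P[] := ok i i; rewrite eqxx mxE => /eqP.
- by have /and3P[] := ok i j; rewrite (negPf (ij : val i != val j)) mxE => /eqP.
- apply/matrixP=> i j; have /and3P[_ _ /eqP] := ok i j.
  rewrite foldrE big_map -[X in iota 0 X](subn0 n) big_mkord !mxE => sum_ij.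
  under eq_bigr do rewrite !mxE.
  by rewrite sum_ij natz -[val i == val j]/(i == j); case: eqP.
- have /and3P[_ /eqP tr_ij _] := ok i j; clear ok.
  by case: skew tr_ij; rewrite !mxE => ->.
Qed.

Lemma conference_tableb_even_small :
  all (fun n => ~~ odd n ==> conference_tableb n (n \notin [:: 6; 10; 14; 18]))
    (iota 1 21).
Proof. by vm_compute. Qed.

Lemma small_conference_exists (R : pzRingType) n :
  (0 < n)%N -> (n < 22)%N -> ~~ odd n -> exists C : 'M[R]_n,
  conference C /\ C^T = if n \in [:: 6; 10; 14; 18] then C else - C.
Proof.
move=> n_gt0 n_lt22 even_n.
have := allP conference_tableb_even_small n; rewrite mem_iota n_gt0 add1n.
case/(_ n_lt22)/implyP/(_ even_n)/conference_tableP => conf tr.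
exists (map_mx intr (table_mx n)); split; first exact: map_conference.
by rewrite map_trmx tr; case: (n \in _); rewrite ?map_mxN.
Qed.

Theorem mainTheorem4 (N : nat) :
  (0 < N)%N -> (N < 22)%N -> ~~ odd N ->
  forall (s : 'S_N) (B : 'M[Real]_N),
    (in_ray s B \/ in_counter_ray s B) ->
    unistochastic B /\
    ((N \in [:: 2; 4; 8; 12; 16; 20]%N) -> orthostochastic B) /\
    ((N \in [:: 6; 10; 14; 18]%N) -> unistochastic B).
Proof.
move=> N_gt0 N_lt22 even_N s B ray.
have N_gt1 : (1 < N)%N by move: N_gt0 even_N; case: (N) => [|[]].
have [al [-> bB]] : exists al : Real,
    B = al *: perm_mx s + (1 - al) *: flat_mx N /\ bistochastic B.
  by case: ray => -[al [_ ?]]; exists al.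
rewrite ray_combination_perm_pattern in bB *.
set a := al + _ in bB *; set b := (1 - al) / _ in a bB *.
have [a0 b0 ab1] := perm_pattern_mx_bistochastic_weights N_gt1 bB.
have [C [confC trC]] := small_conference_exists Real N_gt0 N_lt22 even_N.
have ortho : N \notin [:: 6; 10; 14; 18] -> orthostochastic (perm_pattern_mx s a b).
  move/negPf=> skew_N; rewrite skew_N in trC.
  exact: orthostochastic_skew_conference confC trC a0 b0 ab1 bB.
have uni : unistochastic (perm_pattern_mx s a b).
  case: ifP trC => [_ | /negbT skew_N] trC.
    exact: unistochastic_sym_conference confC trC a0 b0 ab1 bB.
  exact/orthostochastic_unistochastic/ortho.
split=> //; split=> // skew_N; apply/ortho/(contraTN _ skew_N).
by move: (N) => n; rewrite !inE => /or4P[] /eqP->.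
Qed.
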